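(* Let $d$ be a translation-invariant distance on $\mathbb R^2$ (i.e. $d(p+q,p+q')=d(q,q')$ for all $p,q,q'$) which induces the Euclidean topology, and let $d_E$ be the Euclidean distance. Then there exist a neighborhood $U$ of $0$ and a constant $C>0$ such that $d_E(p,0)\le C\, d(p,0)$ for all $p\in U$. *)

From Stdlib Require Import Reals.
Open Scope R_scope.

Definition pt := (R * R)%type.

Definition padd (p q : pt) : pt := (fst p + fst q, snd p + snd q).
Definition origin : pt := (0, 0).

Definition dE (p q : pt) : R :=
  sqrt ((fst p - fst q) ^ 2 + (snd p - snd q) ^ 2).

Definition is_metric (d : pt -> pt -> R) : Prop :=
  (forall p q, 0 <= d p q) /\
  (forall p q, d p q = 0 <-> p = q) /\
  (forall p q, d p q = d q p) /\
  (forall p q r, d p r <= d p q + d q r).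

Definition translation_invariant (d : pt -> pt -> R) : Prop :=
  forall p q q', d (padd p q) (padd p q') = d q q'.

Definition metric_open (d : pt -> pt -> R) (S : pt -> Prop) : Prop :=
  forall x, S x -> exists eps, 0 < eps /\ forall y, d x y < eps -> S y.

Definition induces_euclidean_topology (d : pt -> pt -> R) : Prop :=
  forall S : pt -> Prop, metric_open d S <-> metric_open dE S.

Definition euclid_nbhd (U : pt -> Prop) (p : pt) : Prop :=
  exists r, 0 < r /\ forall q, dE p q < r -> U q.

(* Translation invariance makes the lengths d(n p, 0) grow at most linearly
   in n, while the Euclidean lengths grow exactly linearly.  Because d induces
   the Euclidean topology, a small d-ball around 0 lies in the Euclidean unit
   ball, so every point of Euclidean length at least 1 has d-length at least
   some eps > 0.  For p in the Euclidean unit ball choose n with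
   1 <= n |p| <= 2; then eps <= d(n p, 0) <= n d(p, 0), i.e.
   |p| <= (2 / eps) d(p, 0). *)

From Stdlib Require Import Reals Lra Lia ZArith.
Open Scope R_scope.

Lemma sqrt_sum_sqr_triangle (a b c e : R) :
  sqrt ((a + b) ^ 2 + (c + e) ^ 2) <= sqrt (a ^ 2 + c ^ 2) + sqrt (b ^ 2 + e ^ 2).
Proof.
  set (u := a ^ 2 + c ^ 2); set (v := b ^ 2 + e ^ 2).
  assert (u_ge0 : 0 <= u) by (unfold u; nra).
  assert (v_ge0 : 0 <= v) by (unfold v; nra).
  assert (cauchy_schwarz : a * b + c * e <= sqrt u * sqrt v).
  { rewrite <- sqrt_mult by assumption.
    eapply Rle_trans; [apply RRle_abs|].
    rewrite <- sqrt_Rsqr_abs. apply sqrt_le_1_alt.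
    unfold Rsqr, u, v. pose proof (pow2_ge_0 (a * e - b * c)). nra. }
  assert (Hu := sqrt_sqrt u u_ge0); assert (Hv := sqrt_sqrt v v_ge0).
  assert (0 <= sqrt u) by apply sqrt_pos; assert (0 <= sqrt v) by apply sqrt_pos.
  rewrite <- (sqrt_pow2 (sqrt u + sqrt v)) by lra.
  apply sqrt_le_1_alt. unfold u, v in *. nra.
Qed.

Lemma dE_sym (p q : pt) : dE p q = dE q p.
Proof. unfold dE. f_equal. ring. Qed.

Lemma dE_triangle (p q r : pt) : dE p r <= dE p q + dE q r.
Proof.
  unfold dE.
  replace (fst p - fst r) with ((fst p - fst q) + (fst q - fst r)) by ring.
  replace (snd p - snd r) with ((snd p - snd q) + (snd q - snd r)) by ring.
  apply sqrt_sum_sqr_triangle.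
Qed.

Lemma metric_open_dE_ball (c : pt) (r : R) : metric_open dE (fun q => dE c q < r).
Proof.
  intros x Hx. exists (r - dE c x). split; [lra|].
  intros y Hy. pose proof (dE_triangle c x y). lra.
Qed.

Definition scal (n : nat) (p : pt) : pt := (INR n * fst p, INR n * snd p).

Lemma dE_scal_origin (n : nat) (p : pt) : dE (scal n p) origin = INR n * dE p origin.
Proof.
  unfold dE, scal, origin; cbn [fst snd].
  pose proof (pos_INR n).
  rewrite <- (sqrt_pow2 (INR n)) at 3 by assumption.
  rewrite <- sqrt_mult by (try apply pow2_ge_0; nra).
  f_equal. ring.
Qed.

Lemma d_scal_origin_le (d : pt -> pt -> R) :
  is_metric d -> translation_invariant d ->
  forall n p, d (scal n p) origin <= INR n * d p origin.
Proof.
  intros [_ [d_eq0 [_ d_triangle]]] d_transl.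
  induction n as [|n IH]; intros p.
  - replace (scal 0 p) with origin by (unfold scal, origin; simpl; f_equal; ring).
    rewrite (proj2 (d_eq0 origin origin) eq_refl). simpl. lra.
  - assert (step : d (scal (S n) p) (scal n p) = d p origin).
    { replace (scal (S n) p) with (padd (scal n p) p)
        by (unfold scal, padd; cbn [fst snd]; rewrite S_INR; f_equal; ring).
      replace (scal n p) with (padd (scal n p) origin) at 2
        by (unfold padd, origin; cbn [fst snd]; destruct (scal n p); simpl; f_equal; ring).
      apply d_transl. }
    pose proof (d_triangle (scal (S n) p) (scal n p) origin).
    specialize (IH p). rewrite S_INR. lra.
Qed.

Lemma exists_nat_mul_between_1_2 (t : R) :
  0 < t <= 1 -> exists n : nat, 1 <= INR n * t <= 2.
Proof.
  intros Ht. destruct (archimed (/ t)) as [up_gt up_le].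
  assert (inv_pos : 0 < / t) by (apply Rinv_0_lt_compat; lra).
  assert (up_pos : (0 < up (/ t))%Z) by (apply lt_0_IZR; lra).
  exists (Z.to_nat (up (/ t))).
  rewrite INR_IZR_INZ, Z2Nat.id by lia.
  assert (t * / t = 1) by (field; lra).
  split; nra.
Qed.

Lemma d_ball_sub_dE_ball (d : pt -> pt -> R) :
  induces_euclidean_topology d ->
  exists eps, 0 < eps /\ forall q, d origin q < eps -> dE origin q < 1.
Proof.
  intros Htop.
  apply (proj2 (Htop _) (metric_open_dE_ball origin 1)).
  replace (dE origin origin) with 0; [lra|].
  unfold dE; simpl. rewrite <- sqrt_0. f_equal. ring.
Qed.

Theorem mainTheorem9 (d : pt -> pt -> R)
  (Hd : is_metric d)
  (Htr : translation_invariant d)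
  (Htop : induces_euclidean_topology d) :
  exists (U : pt -> Prop) (C : R),
    euclid_nbhd U origin /\ 0 < C /\
    forall p, U p -> dE p origin <= C * d p origin.
Proof.
  destruct (d_ball_sub_dE_ball d Htop) as [eps [eps_pos d_ball_small]].
  exists (fun q => dE origin q < 1), (2 / eps).
  split; [exists 1; split; [lra | auto]|].
  assert (C_pos : 0 < 2 / eps) by (apply Rdiv_lt_0_compat; lra).
  split; [assumption|].
  intros p Hp. rewrite dE_sym in Hp.
  pose proof Hd as [d_ge0 [_ [d_sym _]]].
  specialize (d_ge0 p origin).
  assert (dE_ge0 : 0 <= dE p origin) by apply sqrt_pos.
  destruct (Req_dec (dE p origin) 0) as [-> | dE_nz]; [nra|].
  destruct (exists_nat_mul_between_1_2 (dE p origin)) as [n [n_ge n_le]]; [lra|].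
  assert (far : eps <= d (scal n p) origin).
  { destruct (Rlt_le_dec (d (scal n p) origin) eps) as [near|]; [|assumption].
    rewrite d_sym in near.
    apply d_ball_small in near. rewrite dE_sym, dE_scal_origin in near. lra. }
  pose proof (d_scal_origin_le d Hd Htr n p).
  apply Rmult_le_reg_r with eps; [assumption|].
  replace (2 / eps * d p origin * eps) with (2 * d p origin) by (field; lra).
  nra.
Qed.
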